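(* In the setting of the context, regard the error exponent $K=K(a)$ as a function of the correlation coefficient $a\in[0,1]$ with $\Pi_0$ and $\sigma^2$ fixed. If $\Gamma=\Pi_0/\sigma^2>1$, then $K(a)$ is monotonically decreasing in $a$ on $[0,1]$; in particular its maximum is attained at $a=0$, where $K(0)=D(\mathcal N(0,1)\|\mathcal N(0,1+\Gamma))$.
   Context: Model: fix $a\in[0,1]$, $\Pi_0>0$, $\sigma^2>0$. The signal is a stationary Gaussian first-order autoregressive sequence $s_{i+1}=a s_i+u_i$, $i\ge1$, with $s_1\sim\mathcal N(0,\Pi_0)$ and $u_i$ i.i.d. $\mathcal N(0,Q)$, $Q=\Pi_0(1-a^2)$, independent of $s_1$. Observations follow $H_0: y_i=w_i$ or $H_1: y_i=s_i+w_i$, $w_i$ i.i.d. $\mathcal N(0,\sigma^2)$ independent of the signal; $\Gamma=\Pi_0/\sigma^2$ is the SNR. The error exponent $K$ is $-\lim_{n\to\infty}\frac1n\log P_M(n)$, where $P_M(n)$ is the miss probability of the level-$\alpha$ Neyman–Pearson detector based on $y_1,\dots,y_n$ (independent of $\alpha\in(0,1)$); explicitly $K=\frac{1}{2\pi}\int_0^{2\pi} D(\mathcal N(0,\sigma^2)\|\mathcal N(0,S_y(\omega)))\,d\omega$ with $S_y(\omega)=\sigma^2+\frac{\Pi_0(1-a^2)}{1-2a\cos\omega+a^2}$, $D$ the Kullback–Leibler divergence. *)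

From Stdlib Require Import Reals.
From Coquelicot Require Import Coquelicot.
Open Scope R_scope.

(* Kullback-Leibler divergence D(N(0,s1) || N(0,s2)) between centred
   Gaussians with variances s1, s2 > 0 (standard closed form). *)
Definition KL_gauss (s1 s2 : R) : R :=
  / 2 * (s1 / s2 - 1 - ln (s1 / s2)).

Definition S_y (Pi0 sigma2 a w : R) : R :=
  sigma2 + Pi0 * (1 - a ^ 2) / (1 - 2 * a * cos w + a ^ 2).

Definition K_exp (Pi0 sigma2 a : R) : R :=
  / (2 * PI) * RInt (fun w => KL_gauss sigma2 (S_y Pi0 sigma2 a w)) 0 (2 * PI).

From Stdlib Require Import Reals Lra Lia Psatz.
From Coquelicot Require Import Coquelicot.
Open Scope R_scope.

(* With [h_b(w) = |e^{iw} - b|^2], the observation spectrum factors as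
   [S_y = sigma2 * l * h_{a/l} / h_a], where [l] is the larger root of
   [l^2 - (1 + a^2 + Γ (1 - a^2)) l + a^2 = 0].  For [|b| < 1] the circle integrals
   [∫ ln h_b = 0] and [∫ 1/h_b = 2π / (1 - b^2)] both follow from
   [h_b(w) h_b(w + π) = h_{b^2}(2w)] by iterating [b ↦ b^2], which drives [b] to [0].
   They give [K(a) = (ln l - Γ (l - 1) / ((Γ - 1) l + Γ + 1)) / 2].  As [a] runs over
   [[0, 1]], [l] decreases from [1 + Γ] to [1], and on that interval this function of
   [l] is strictly increasing precisely because [Γ > 1]. *)

Lemma Rabs_le_geom_eq0 (x C q : R) :
  0 <= q < 1 -> (forall n, Rabs x <= C * q ^ n) -> x = 0.
Proof.
  intros Hq Hx.
  assert (Hlim : is_lim_seq (fun n => C * q ^ n) (C * 0)).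
  { apply (is_lim_seq_scal_l _ C 0), is_lim_seq_geom. rewrite Rabs_pos_eq; lra. }
  pose proof (is_lim_seq_le _ _ _ _ Hx (is_lim_seq_const (Rabs x)) Hlim) as Hle.
  simpl in Hle. rewrite Rmult_0_r in Hle.
  apply Rabs_eq_0. apply Rle_antisym; [exact Hle | apply Rabs_pos].
Qed.

Lemma pow_le_pow_le1 (x : R) (m n : nat) : 0 <= x <= 1 -> (m <= n)%nat -> x ^ n <= x ^ m.
Proof.
  intros Hx Hmn. replace n with (m + (n - m))%nat by lia. rewrite pow_add.
  pose proof (pow_le x m (proj1 Hx)).
  pose proof (pow_incr x 1 (n - m) Hx) as H1. rewrite pow1 in H1. nra.
Qed.

Lemma pow_pow2_S b n : b ^ (2 ^ S n) = (b ^ (2 ^ n)) ^ 2.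
Proof. rewrite Nat.pow_succ_r', Nat.mul_comm, pow_mult. reflexivity. Qed.

Lemma Rabs_sqr_lt1 b : Rabs b < 1 -> Rabs (b ^ 2) < 1.
Proof. intros Hb. rewrite <- RPow_abs. pose proof (Rabs_pos b). nra. Qed.

Lemma Rabs_pow_pow2_lt1 b n : Rabs b < 1 -> Rabs (b ^ (2 ^ n)) < 1.
Proof.
  intros Hb. induction n as [|n IH]; [rewrite Nat.pow_0_r, pow_1; exact Hb|].
  rewrite pow_pow2_S. apply Rabs_sqr_lt1, IH.
Qed.

Lemma Rabs_pow_pow2_le b m n :
  Rabs b <= 1 -> (m <= 2 ^ n)%nat -> Rabs (b ^ (2 ^ n)) <= Rabs b ^ m.
Proof.
  intros Hb Hm. rewrite <- RPow_abs.
  apply pow_le_pow_le1; [split; [apply Rabs_pos | exact Hb] | exact Hm].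
Qed.

Lemma Rabs_pow_pow2_le_Rabs b n : Rabs b <= 1 -> Rabs (b ^ (2 ^ n)) <= Rabs b.
Proof.
  intros Hb. rewrite <- (pow_1 (Rabs b)). apply Rabs_pow_pow2_le; [exact Hb|].
  pose proof (Nat.pow_gt_lin_r 2 n). lia.
Qed.

Section PeriodicIntegral.

Variables (f : R -> R) (T : R).
Hypothesis f_cont : forall x, continuous f x.
Hypothesis f_periodic : forall x, f (x + T) = f x.

Let f_int a b : ex_RInt f a b := ex_RInt_continuous f a b (fun z _ => f_cont z).

Lemma RInt_periodic_shift a b : RInt f (a + T) (b + T) = RInt f a b.
Proof.
  replace (a + T) with (1 * a + T) by ring. replace (b + T) with (1 * b + T) by ring.
  rewrite <- RInt_comp_lin by apply f_int.
  apply RInt_ext. intros x _. change (1 * f (1 * x + T) = f x).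
  rewrite !Rmult_1_l. apply f_periodic.
Qed.

Lemma RInt_translate c : RInt (fun w => f (w + c)) 0 T = RInt f 0 T.
Proof.
  transitivity (RInt f (1 * 0 + c) (1 * T + c)).
  { rewrite <- RInt_comp_lin by apply f_int.
    apply RInt_ext. intros x _. change (f (x + c) = 1 * f (1 * x + c)).
    rewrite !Rmult_1_l. reflexivity. }
  replace (1 * 0 + c) with c by ring. replace (1 * T + c) with (c + T) by ring.
  rewrite <- (RInt_Chasles f c 0 (c + T)), <- (RInt_Chasles f 0 T (c + T)) by apply f_int.
  rewrite <- (Rplus_0_l T) at 2. rewrite RInt_periodic_shift.
  rewrite <- (opp_RInt_swap f 0 c) by apply f_int.
  change (- RInt f 0 c + (RInt f 0 T + RInt f 0 c) = RInt f 0 T). ring.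
Qed.

Lemma RInt_add_translate c :
  RInt (fun w => f w + f (w + c)) 0 T = 2 * RInt f 0 T.
Proof.
  assert (Hc : ex_RInt (fun w => f (w + c)) 0 T).
  { apply (ex_RInt_continuous (V := R_CompleteNormedModule)). intros z _.
    apply (continuous_comp (fun w => w + c) f); [|apply f_cont].
    apply (continuous_plus (fun w : R => w) (fun _ => c));
      [apply continuous_id | apply continuous_const]. }
  rewrite (RInt_plus (V := R_CompleteNormedModule)) by (apply f_int || exact Hc).
  rewrite RInt_translate. change (RInt f 0 T + RInt f 0 T = 2 * RInt f 0 T). ring.
Qed.

Lemma RInt_periodic_double : RInt (fun w => f (2 * w)) 0 T = RInt f 0 T.
Proof.
  assert (H := RInt_comp_lin f 2 0 0 T (f_int _ _)).
  rewrite (RInt_scal (V := R_CompleteNormedModule) (fun y => f (2 * y + 0))) in H.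
  2: { apply (ex_RInt_continuous (V := R_CompleteNormedModule)). intros z _.
       apply (continuous_comp (fun w => 2 * w + 0) f); [|apply f_cont].
       apply (@ex_derive_continuous R_AbsRing R_NormedModule). auto_derive. exact I. }
  replace (2 * 0 + 0) with 0 in H by ring. replace (2 * T + 0) with (T + T) in H by ring.
  rewrite <- (RInt_Chasles f 0 T (T + T)) in H by apply f_int.
  replace (RInt f T (T + T)) with (RInt f (0 + T) (T + T)) in H by (rewrite Rplus_0_l; reflexivity).
  rewrite RInt_periodic_shift in H.
  rewrite (RInt_ext (fun w => f (2 * w)) (fun y => f (2 * y + 0)))
    by (intros; rewrite Rplus_0_r; reflexivity).
  change (2 * RInt (fun y => f (2 * y + 0)) 0 T = RInt f 0 T + RInt f 0 T) in H. lra.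
Qed.

End PeriodicIntegral.

(* [circ_dist2 b w = |e^{iw} - b|^2]. *)
Definition circ_dist2 (b w : R) : R := 1 + b ^ 2 - 2 * b * cos w.

Lemma circ_dist2_bounds b c w :
  Rabs c <= Rabs b <= 1 -> (1 - Rabs b) ^ 2 <= circ_dist2 c w <= (1 + Rabs b) ^ 2.
Proof.
  intros Hcb. unfold circ_dist2.
  assert (Hcos : Rabs (c * cos w) <= Rabs c).
  { rewrite Rabs_mult. pose proof (Rabs_pos c).
    assert (Rabs (cos w) <= 1) by (apply Rabs_le, COS_bound). nra. }
  apply Rabs_le_between in Hcos.
  rewrite <- (pow2_abs c). pose proof (Rabs_pos c). nra.
Qed.

Lemma circ_dist2_pos b w : Rabs b < 1 -> 0 < circ_dist2 b w.
Proof.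
  intros Hb. assert (Hb1 : Rabs b <= Rabs b <= 1) by lra.
  destruct (circ_dist2_bounds b b w Hb1). pose proof (Rabs_pos b). nra.
Qed.

Lemma circ_dist2_periodic b w : circ_dist2 b (w + 2 * PI) = circ_dist2 b w.
Proof. unfold circ_dist2. rewrite cos_plus, cos_2PI, sin_2PI. ring. Qed.

Lemma circ_dist2_mul_shift b w :
  circ_dist2 b w * circ_dist2 b (w + PI) = circ_dist2 (b ^ 2) (2 * w).
Proof. unfold circ_dist2. rewrite neg_cos, cos_2a_cos. ring. Qed.

Lemma circ_dist2_add_shift b w :
  circ_dist2 b w + circ_dist2 b (w + PI) = 2 * (1 + b ^ 2).
Proof. unfold circ_dist2. rewrite neg_cos. ring. Qed.

Section CircleIntegrals.

Variable b : R.
Hypothesis b_lt1 : Rabs b < 1.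

Lemma continuous_ln_circ_dist2 w : continuous (fun w => ln (circ_dist2 b w)) w.
Proof.
  apply (@ex_derive_continuous R_AbsRing R_NormedModule).
  pose proof (circ_dist2_pos b w b_lt1). unfold circ_dist2 in *. auto_derive. lra.
Qed.

Lemma continuous_inv_circ_dist2 w : continuous (fun w => / circ_dist2 b w) w.
Proof.
  apply (@ex_derive_continuous R_AbsRing R_NormedModule).
  pose proof (circ_dist2_pos b w b_lt1). unfold circ_dist2 in *. auto_derive. lra.
Qed.

End CircleIntegrals.

Definition circ_log_int (b : R) : R := RInt (fun w => ln (circ_dist2 b w)) 0 (2 * PI).
Definition circ_inv_int (b : R) : R := RInt (fun w => / circ_dist2 b w) 0 (2 * PI).

Lemma circ_log_int_sqr b : Rabs b < 1 -> circ_log_int (b ^ 2) = 2 * circ_log_int b.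
Proof.
  intros Hb. unfold circ_log_int.
  rewrite <- (RInt_periodic_double (fun w => ln (circ_dist2 (b ^ 2) w))).
  2: apply continuous_ln_circ_dist2, Rabs_sqr_lt1, Hb.
  2: intros; rewrite circ_dist2_periodic; reflexivity.
  rewrite <- (RInt_add_translate _ _ (continuous_ln_circ_dist2 b Hb)) with (c := PI).
  2: intros; rewrite circ_dist2_periodic; reflexivity.
  apply RInt_ext. intros w _.
  rewrite <- circ_dist2_mul_shift, ln_mult by apply circ_dist2_pos, Hb. reflexivity.
Qed.

Lemma circ_inv_int_sqr b :
  Rabs b < 1 -> (1 - (b ^ 2) ^ 2) * circ_inv_int (b ^ 2) = (1 - b ^ 2) * circ_inv_int b.
Proof.
  intros Hb. unfold circ_inv_int.
  assert (Hsum : 2 * RInt (fun w => / circ_dist2 b w) 0 (2 * PI)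
               = 2 * (1 + b ^ 2) * RInt (fun w => / circ_dist2 (b ^ 2) w) 0 (2 * PI)).
  { rewrite <- (RInt_add_translate _ _ (continuous_inv_circ_dist2 b Hb)) with (c := PI).
    2: intros; rewrite circ_dist2_periodic; reflexivity.
    rewrite <- (RInt_periodic_double (fun w => / circ_dist2 (b ^ 2) w)).
    2: apply continuous_inv_circ_dist2, Rabs_sqr_lt1, Hb.
    2: intros; rewrite circ_dist2_periodic; reflexivity.
    rewrite <- (RInt_scal (V := R_CompleteNormedModule)).
    2: { apply (ex_RInt_continuous (V := R_CompleteNormedModule)). intros z _.
         apply (continuous_comp (fun w => 2 * w) (fun w => / circ_dist2 (b ^ 2) w)).
         - apply (@ex_derive_continuous R_AbsRing R_NormedModule). auto_derive. exact I.
         - apply continuous_inv_circ_dist2, Rabs_sqr_lt1, Hb. }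
    apply RInt_ext. intros w _. change (/ circ_dist2 b w + / circ_dist2 b (w + PI)
      = 2 * (1 + b ^ 2) * / circ_dist2 (b ^ 2) (2 * w)).
    rewrite <- circ_dist2_mul_shift, <- (circ_dist2_add_shift b w).
    pose proof (circ_dist2_pos b w Hb). pose proof (circ_dist2_pos b (w + PI) Hb).
    field. lra. }
  nra.
Qed.

Lemma circ_log_int_pow2 b n :
  Rabs b < 1 -> circ_log_int (b ^ (2 ^ n)) = 2 ^ n * circ_log_int b.
Proof.
  intros Hb. induction n as [|n IH]; [rewrite Nat.pow_0_r, pow_1, pow_O; ring|].
  rewrite pow_pow2_S, circ_log_int_sqr, IH by (apply Rabs_pow_pow2_lt1, Hb). simpl. ring.
Qed.

Lemma circ_inv_int_pow2 b n : Rabs b < 1 ->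
  (1 - (b ^ (2 ^ n)) ^ 2) * circ_inv_int (b ^ (2 ^ n)) = (1 - b ^ 2) * circ_inv_int b.
Proof.
  intros Hb. induction n as [|n IH]; [rewrite Nat.pow_0_r, pow_1; reflexivity|].
  rewrite pow_pow2_S, circ_inv_int_sqr by (apply Rabs_pow_pow2_lt1, Hb). exact IH.
Qed.

Lemma Rabs_circ_log_int_le b c : Rabs c <= Rabs b < 1 ->
  Rabs (circ_log_int c) <= 2 * PI * (Rabs (ln ((1 - Rabs b) ^ 2)) + Rabs (ln ((1 + Rabs b) ^ 2))).
Proof.
  intros Hcb. pose proof PI_RGT_0. pose proof (Rabs_pos b).
  assert (Hc : Rabs c < 1) by lra.
  unfold circ_log_int. replace (2 * PI) with (2 * PI - 0) at 2 by ring.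
  apply abs_RInt_le_const; [lra | |].
  { apply (ex_RInt_continuous (V := R_CompleteNormedModule)). intros z _.
    apply continuous_ln_circ_dist2, Hc. }
  intros w _. destruct (circ_dist2_bounds b c w) as [Hlo Hhi]; [lra|].
  assert (Hlo_pos : 0 < (1 - Rabs b) ^ 2) by (apply pow_lt; lra).
  pose proof (ln_le _ _ Hlo_pos Hlo). pose proof (ln_le _ _ (circ_dist2_pos c w Hc) Hhi).
  pose proof (Rle_abs (ln ((1 + Rabs b) ^ 2))). pose proof (Rle_abs (- ln ((1 - Rabs b) ^ 2))).
  rewrite Rabs_Ropp in *.
  pose proof (Rabs_pos (ln ((1 + Rabs b) ^ 2))). pose proof (Rabs_pos (ln ((1 - Rabs b) ^ 2))).
  apply Rabs_le. lra.
Qed.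

Lemma Rabs_circ_inv_int_sub_le b c : Rabs c <= Rabs b < 1 ->
  Rabs ((1 - c ^ 2) * circ_inv_int c - 2 * PI) <= 2 * PI * (4 / (1 - Rabs b) ^ 2) * Rabs c.
Proof.
  intros Hcb. pose proof PI_RGT_0. pose proof (Rabs_pos b). pose proof (Rabs_pos c).
  assert (Hc : Rabs c < 1) by lra.
  assert (Hint : ex_RInt (fun w => (1 - c ^ 2) * / circ_dist2 c w) 0 (2 * PI)).
  { apply (ex_RInt_continuous (V := R_CompleteNormedModule)). intros z _.
    apply (continuous_scal_r (K := R_AbsRing) (V := R_NormedModule) (1 - c ^ 2)).
    apply continuous_inv_circ_dist2, Hc. }
  replace ((1 - c ^ 2) * circ_inv_int c - 2 * PI)
    with (RInt (fun w => (1 - c ^ 2) * / circ_dist2 c w - 1) 0 (2 * PI)).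
  2: { rewrite (RInt_minus (V := R_CompleteNormedModule)) by (exact Hint || apply ex_RInt_const).
       rewrite (RInt_scal (V := R_CompleteNormedModule) (fun w => / circ_dist2 c w)).
       2: { apply (ex_RInt_continuous (V := R_CompleteNormedModule)). intros z _.
            apply continuous_inv_circ_dist2, Hc. }
       rewrite RInt_const. unfold circ_inv_int.
       change ((1 - c ^ 2) * RInt (fun w => / circ_dist2 c w) 0 (2 * PI) - (2 * PI - 0) * 1
         = (1 - c ^ 2) * RInt (fun w => / circ_dist2 c w) 0 (2 * PI) - 2 * PI). ring. }
  rewrite Rmult_assoc. replace (2 * PI) with (2 * PI - 0) at 2 by ring.
  apply abs_RInt_le_const; [lra | |].
  { apply (ex_RInt_minus (V := R_NormedModule)); [exact Hint | apply ex_RInt_const]. }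
  intros w _. destruct (circ_dist2_bounds b c w) as [Hlo _]; [lra|].
  pose proof (circ_dist2_pos c w Hc) as Hpos.
  assert (Hlo_pos : 0 < (1 - Rabs b) ^ 2) by (apply pow_lt; lra).
  replace ((1 - c ^ 2) * / circ_dist2 c w - 1)
    with ((2 * c * cos w - 2 * c ^ 2) / circ_dist2 c w) by (unfold circ_dist2 in *; field; lra).
  assert (Hnum : Rabs (2 * c * cos w - 2 * c ^ 2) <= 4 * Rabs c).
  { assert (Rabs (cos w) <= 1) by (apply Rabs_le, COS_bound).
    eapply Rle_trans; [apply Rabs_triang|].
    rewrite Rabs_Ropp, !Rabs_mult, <- RPow_abs, (Rabs_pos_eq 2) by lra.
    pose proof (Rabs_pos (cos w)). nra. }
  unfold Rdiv. rewrite Rabs_mult, (Rabs_pos_eq (/ _)) by (apply Rlt_le, Rinv_0_lt_compat, Hpos).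
  assert (/ circ_dist2 c w <= / (1 - Rabs b) ^ 2) by (apply Rinv_le_contravar; lra).
  pose proof (Rinv_0_lt_compat _ Hpos). pose proof (Rabs_pos (2 * c * cos w - 2 * c ^ 2)).
  nra.
Qed.

Lemma circ_log_int_eq0 b : Rabs b < 1 -> circ_log_int b = 0.
Proof.
  intros Hb.
  set (M := Rabs (ln ((1 - Rabs b) ^ 2)) + Rabs (ln ((1 + Rabs b) ^ 2))).
  apply (Rabs_le_geom_eq0 _ (2 * PI * M) (/ 2)); [lra|]. intros n.
  assert (Hbn : Rabs (b ^ (2 ^ n)) <= Rabs b) by (apply Rabs_pow_pow2_le_Rabs; lra).
  pose proof (Rabs_circ_log_int_le b (b ^ (2 ^ n)) (conj Hbn Hb)) as Hn.
  rewrite circ_log_int_pow2, Rabs_mult, (Rabs_pos_eq (2 ^ n)) in Hn by (auto; apply pow_le; lra).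
  rewrite pow_inv. apply (Rmult_le_reg_l (2 ^ n)); [apply pow_lt; lra|].
  replace (2 ^ n * (2 * PI * M * / 2 ^ n)) with (2 * PI * M) by (field; apply pow_nonzero; lra).
  exact Hn.
Qed.

Lemma circ_inv_int_eq b : Rabs b < 1 -> circ_inv_int b = 2 * PI / (1 - b ^ 2).
Proof.
  intros Hb. pose proof (Rabs_pos b).
  assert (Hb2 : 0 < 1 - b ^ 2) by (rewrite <- (pow2_abs b); nra).
  enough (H0 : (1 - b ^ 2) * circ_inv_int b - 2 * PI = 0).
  { apply (Rmult_eq_reg_l (1 - b ^ 2)); [|lra]. field_simplify; lra. }
  apply (Rabs_le_geom_eq0 _ (2 * PI * (4 / (1 - Rabs b) ^ 2)) (Rabs b)); [lra|]. intros n.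
  assert (Hbn : Rabs (b ^ (2 ^ n)) <= Rabs b) by (apply Rabs_pow_pow2_le_Rabs; lra).
  rewrite <- (circ_inv_int_pow2 b n Hb).
  eapply Rle_trans; [apply (Rabs_circ_inv_int_sub_le b); lra|].
  apply Rmult_le_compat_l.
  - pose proof PI_RGT_0. assert (0 < (1 - Rabs b) ^ 2) by (apply pow_lt; lra).
    apply Rmult_le_pos; [lra|]. apply Rlt_le, Rdiv_lt_0_compat; lra.
  - apply Rabs_pow_pow2_le; [lra|]. apply Nat.lt_le_incl, Nat.pow_gt_lin_r. lia.
Qed.

Lemma is_RInt_ln_circ_dist2 b : Rabs b < 1 ->
  is_RInt (fun w => ln (circ_dist2 b w)) 0 (2 * PI) 0.
Proof.
  intros Hb. rewrite <- (circ_log_int_eq0 b Hb) at 2.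
  apply (RInt_correct (V := R_CompleteNormedModule)).
  apply ex_RInt_continuous. intros z _. apply continuous_ln_circ_dist2, Hb.
Qed.

Lemma is_RInt_inv_circ_dist2 b : Rabs b < 1 ->
  is_RInt (fun w => / circ_dist2 b w) 0 (2 * PI) (2 * PI / (1 - b ^ 2)).
Proof.
  intros Hb. rewrite <- (circ_inv_int_eq b Hb).
  apply (RInt_correct (V := R_CompleteNormedModule)).
  apply ex_RInt_continuous. intros z _. apply continuous_inv_circ_dist2, Hb.
Qed.

Definition sf_coef (g a : R) : R := 1 + a ^ 2 + g * (1 - a ^ 2).

(* Gain of the spectral factorization [S_y = sigma2 * l * circ_dist2 (a / l) / circ_dist2 a]. *)
Definition sf_gain (g a : R) : R := (sf_coef g a + sqrt (sf_coef g a ^ 2 - 4 * a ^ 2)) / 2.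

Definition exponent_of_gain (g l : R) : R := / 2 * (ln l - g * (l - 1) / ((g - 1) * l + g + 1)).

Lemma sf_root_ratio g a l : l ^ 2 - sf_coef g a * l + a ^ 2 = 0 ->
  l ^ 2 - a ^ 2 <> 0 -> (g - 1) * l + g + 1 <> 0 ->
  (1 - a ^ 2) * l / (l ^ 2 - a ^ 2) = (l - 1) / ((g - 1) * l + g + 1).
Proof.
  intros Hroot Hd1 Hd2. unfold sf_coef in Hroot.
  field_simplify_eq; [|split; assumption].
  apply Rminus_diag_uniq.
  transitivity (- (l + 1) * (l ^ 2 - (1 + a ^ 2 + g * (1 - a ^ 2)) * l + a ^ 2)); [ring|].
  rewrite Hroot. ring.
Qed.

Section SpectralFactor.

Variable g : R.
Hypothesis g_gt1 : 1 < g.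

Lemma sf_coef_ge2 a : 0 <= a <= 1 -> 2 <= sf_coef g a.
Proof.
  intros Ha. unfold sf_coef.
  assert (0 <= (g - 1) * (1 - a ^ 2)) by (apply Rmult_le_pos; nra). nra.
Qed.

Lemma sf_disc_nonneg a : 0 <= a <= 1 -> 0 <= sf_coef g a ^ 2 - 4 * a ^ 2.
Proof.
  intros Ha. pose proof (sf_coef_ge2 a Ha).
  replace (sf_coef g a ^ 2 - 4 * a ^ 2)
    with ((sf_coef g a - 2 * a) * (sf_coef g a + 2 * a)) by ring.
  apply Rmult_le_pos; lra.
Qed.

Lemma sf_gain_root a : 0 <= a <= 1 -> sf_gain g a ^ 2 - sf_coef g a * sf_gain g a + a ^ 2 = 0.
Proof.
  intros Ha. pose proof (sqrt_sqrt _ (sf_disc_nonneg a Ha)). unfold sf_gain.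
  set (s := sqrt (sf_coef g a ^ 2 - 4 * a ^ 2)) in *. nra.
Qed.

Lemma sf_gain_ge1 a : 0 <= a <= 1 -> 1 <= sf_gain g a.
Proof.
  intros Ha. pose proof (sqrt_pos (sf_coef g a ^ 2 - 4 * a ^ 2)). pose proof (sf_coef_ge2 a Ha).
  unfold sf_gain. lra.
Qed.

Lemma sf_gain_gt1 a : 0 <= a < 1 -> 1 < sf_gain g a.
Proof.
  intros Ha. pose proof (sqrt_pos (sf_coef g a ^ 2 - 4 * a ^ 2)).
  assert (0 < (g - 1) * (1 - a ^ 2)) by (apply Rmult_lt_0_compat; nra).
  unfold sf_gain, sf_coef in *. lra.
Qed.

Lemma sf_gain_le a : 0 <= a <= 1 -> sf_gain g a <= 1 + g.
Proof.
  intros Ha. pose proof (sf_disc_nonneg a Ha).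
  assert (Hgap : 0 <= 2 + 2 * g - sf_coef g a) by (unfold sf_coef; nra).
  enough (sqrt (sf_coef g a ^ 2 - 4 * a ^ 2) <= 2 + 2 * g - sf_coef g a) by (unfold sf_gain; lra).
  rewrite <- (sqrt_pow2 _ Hgap). apply sqrt_le_1_alt.
  assert (0 <= (1 + g) * ((g - 1) * a ^ 2))
    by (apply Rmult_le_pos; [lra | apply Rmult_le_pos; nra]).
  replace ((2 + 2 * g - sf_coef g a) ^ 2)
    with (sf_coef g a ^ 2 - 4 * a ^ 2 + 4 * ((1 + g) * ((g - 1) * a ^ 2)) + 4 * a ^ 2)
    by (unfold sf_coef; ring).
  nra.
Qed.

Lemma sf_gain_1 : sf_gain g 1 = 1.
Proof.
  unfold sf_gain, sf_coef. replace ((1 + 1 ^ 2 + g * (1 - 1 ^ 2)) ^ 2 - 4 * 1 ^ 2) with 0 by ring.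
  rewrite sqrt_0. field.
Qed.

Lemma sf_gain_decreasing a b : 0 <= a -> a < b -> b <= 1 -> sf_gain g b < sf_gain g a.
Proof.
  intros Ha Hab Hb.
  assert (0 < (g - 1) * (b ^ 2 - a ^ 2)) by (apply Rmult_lt_0_compat; nra).
  assert (Hcoef : sf_coef g b < sf_coef g a) by (unfold sf_coef; nra).
  pose proof (sf_coef_ge2 b (conj (Rle_trans _ _ _ Ha (Rlt_le _ _ Hab)) Hb)).
  assert (sqrt (sf_coef g b ^ 2 - 4 * b ^ 2) <= sqrt (sf_coef g a ^ 2 - 4 * a ^ 2))
    by (apply sqrt_le_1_alt; nra).
  unfold sf_gain. lra.
Qed.

Lemma circ_dist2_factor a w : 0 <= a < 1 ->
  circ_dist2 a w + g * (1 - a ^ 2) = sf_gain g a * circ_dist2 (a / sf_gain g a) w.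
Proof.
  intros Ha. pose proof (sf_gain_gt1 a Ha).
  pose proof (sf_gain_root a (conj (proj1 Ha) (Rlt_le _ _ (proj2 Ha)))) as Hroot.
  unfold circ_dist2, sf_coef in *. set (l := sf_gain g a) in *.
  apply (Rmult_eq_reg_l l); [|lra]. field_simplify; [|lra]. nra.
Qed.

Lemma sf_gain_div_lt1 a : 0 <= a < 1 -> Rabs (a / sf_gain g a) < 1.
Proof.
  intros Ha. pose proof (sf_gain_gt1 a Ha).
  rewrite Rabs_pos_eq by (apply Rdiv_le_0_compat; lra).
  apply (Rmult_lt_reg_r (sf_gain g a)); [lra|]. field_simplify; lra.
Qed.

End SpectralFactor.

Lemma ln_lt_sub1 x : 0 < x -> x <> 1 -> ln x < x - 1.
Proof.
  intros Hx Hx1. assert (Hln : ln x <> 0).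
  { intros E. apply Hx1. rewrite <- (exp_ln x Hx), E. apply exp_0. }
  pose proof (exp_ineq1 _ Hln). rewrite exp_ln in * by exact Hx. lra.
Qed.

Lemma exponent_of_gain_increasing g x y : 1 < g -> 1 <= x -> x < y -> y <= 1 + g ->
  exponent_of_gain g x < exponent_of_gain g y.
Proof.
  intros Hg Hx Hxy Hy. unfold exponent_of_gain.
  assert (Hln : (y - x) / y < ln y - ln x).
  { assert (Hxy1 : x / y <> 1)
      by (intros E; apply (f_equal (Rmult y)) in E; field_simplify in E; lra).
    pose proof (ln_lt_sub1 (x / y) ltac:(apply Rdiv_lt_0_compat; lra) Hxy1).
    rewrite ln_div in * by lra.
    replace ((y - x) / y) with (- (x / y - 1)) by (field; lra). lra. }
  set (dx := (g - 1) * x + g + 1). set (dy := (g - 1) * y + g + 1).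
  assert (Hdx : 2 * g <= dx) by (unfold dx; nra).
  assert (Hdy : g * y <= dy) by (unfold dy; nra).
  assert (Hgap : 0 <= (y - x) * (dx * dy - 2 * g ^ 2 * y) / (y * (dx * dy))).
  { assert (2 * g * (g * y) <= dx * dy) by (apply Rmult_le_compat; nra).
    apply Rdiv_le_0_compat; [apply Rmult_le_pos; nra | apply Rmult_lt_0_compat; nra]. }
  replace ((y - x) * (dx * dy - 2 * g ^ 2 * y) / (y * (dx * dy)))
    with ((y - x) / y - (g * (y - 1) / dy - g * (x - 1) / dx)) in Hgap
    by (unfold dx, dy in *; field; nra).
  lra.
Qed.

Section ErrorExponent.

Variables Pi0 sigma2 : R.
Hypothesis sigma2_pos : 0 < sigma2.
Hypothesis Gamma_gt1 : 1 < Pi0 / sigma2.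

Let Pi0_pos : 0 < Pi0.
Proof. replace Pi0 with (Pi0 / sigma2 * sigma2) by (field; lra). nra. Qed.

Lemma S_y_ratio a w : 0 <= a < 1 ->
  sigma2 / S_y Pi0 sigma2 a w = circ_dist2 a w / (circ_dist2 a w + Pi0 / sigma2 * (1 - a ^ 2)).
Proof.
  intros Ha. assert (Ha1 : Rabs a < 1) by (rewrite Rabs_pos_eq; lra).
  pose proof (circ_dist2_pos a w Ha1).
  assert (0 <= Pi0 / sigma2 * (1 - a ^ 2)) by (apply Rmult_le_pos; nra).
  assert (0 <= Pi0 * (1 - a ^ 2)) by nra.
  assert (0 < circ_dist2 a w * sigma2) by nra.
  unfold S_y.
  replace (1 - 2 * a * cos w + a ^ 2) with (circ_dist2 a w) by (unfold circ_dist2; ring).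
  field. repeat split; lra.
Qed.

Lemma KL_gauss_S_y_split a w : 0 <= a < 1 ->
  let l := sf_gain (Pi0 / sigma2) a in
  KL_gauss sigma2 (S_y Pi0 sigma2 a w)
  = / 2 * (ln l + (- (Pi0 / sigma2) * (1 - a ^ 2) / l) * / circ_dist2 (a / l) w
           - ln (circ_dist2 a w) + ln (circ_dist2 (a / l) w)).
Proof.
  intros Ha l.
  pose proof (sf_gain_gt1 _ Gamma_gt1 a Ha) as Hl. fold l in Hl.
  pose proof (sf_gain_div_lt1 _ Gamma_gt1 a Ha) as Hb. fold l in Hb.
  assert (Ha1 : Rabs a < 1) by (rewrite Rabs_pos_eq; lra).
  pose proof (circ_dist2_pos a w Ha1). pose proof (circ_dist2_pos (a / l) w Hb).
  pose proof (circ_dist2_factor _ Gamma_gt1 a w Ha) as Hfac. fold l in Hfac.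
  unfold KL_gauss. rewrite S_y_ratio, Hfac by exact Ha.
  assert (0 < l * circ_dist2 (a / l) w) by (apply Rmult_lt_0_compat; lra).
  rewrite ln_div, ln_mult by lra.
  replace (circ_dist2 a w) with (l * circ_dist2 (a / l) w - Pi0 / sigma2 * (1 - a ^ 2)) at 1 by lra.
  field. split; lra.
Qed.

Lemma K_exp_gain_form a : 0 <= a < 1 ->
  let l := sf_gain (Pi0 / sigma2) a in
  K_exp Pi0 sigma2 a = / 2 * (ln l - Pi0 / sigma2 * ((1 - a ^ 2) * l / (l ^ 2 - a ^ 2))).
Proof.
  intros Ha l.
  pose proof (sf_gain_gt1 _ Gamma_gt1 a Ha) as Hl. fold l in Hl.
  pose proof (sf_gain_div_lt1 _ Gamma_gt1 a Ha) as Hb. fold l in Hb.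
  assert (Ha1 : Rabs a < 1) by (rewrite Rabs_pos_eq; lra).
  set (k := - (Pi0 / sigma2) * (1 - a ^ 2) / l).
  assert (HI : is_RInt (fun w => KL_gauss sigma2 (S_y Pi0 sigma2 a w)) 0 (2 * PI)
      (/ 2 * ((2 * PI - 0) * ln l + k * (2 * PI / (1 - (a / l) ^ 2)) - 0 + 0))).
  { apply (is_RInt_ext (V := R_NormedModule))
      with (fun w => / 2 * (ln l + k * / circ_dist2 (a / l) w
                            - ln (circ_dist2 a w) + ln (circ_dist2 (a / l) w))).
    { intros w _. symmetry. apply KL_gauss_S_y_split, Ha. }
    apply (is_RInt_scal (V := R_NormedModule)).
    apply (is_RInt_plus (V := R_NormedModule)); [apply (is_RInt_minus (V := R_NormedModule))|].
    apply (is_RInt_plus (V := R_NormedModule)).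
    apply (is_RInt_const (V := R_NormedModule)).
    apply (is_RInt_scal (V := R_NormedModule)).
    all: auto using is_RInt_inv_circ_dist2, is_RInt_ln_circ_dist2. }
  unfold K_exp. rewrite (is_RInt_unique _ _ _ _ HI). unfold k.
  pose proof PI_RGT_0. assert (0 < l ^ 2 - a ^ 2) by nra.
  field. repeat split; lra.
Qed.

Lemma K_exp_1 : K_exp Pi0 sigma2 1 = 0.
Proof.
  assert (Hpt : forall w, KL_gauss sigma2 (S_y Pi0 sigma2 1 w) = 0).
  { intros w. unfold KL_gauss, S_y. replace (1 - 1 ^ 2) with 0 by ring.
    rewrite Rmult_0_r, Rdiv_0_l, Rplus_0_r, Rdiv_diag, ln_1 by lra. ring. }
  unfold K_exp. rewrite (RInt_ext _ (fun _ => 0)) by (intros w _; apply Hpt).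
  rewrite RInt_const. change (/ (2 * PI) * ((2 * PI - 0) * 0) = 0). ring.
Qed.

Lemma K_exp_0 : K_exp Pi0 sigma2 0 = KL_gauss 1 (1 + Pi0 / sigma2).
Proof.
  assert (Hpt : forall w, KL_gauss sigma2 (S_y Pi0 sigma2 0 w) = KL_gauss 1 (1 + Pi0 / sigma2)).
  { intros w. unfold KL_gauss, S_y.
    replace (sigma2 / (sigma2 + Pi0 * (1 - 0 ^ 2) / (1 - 2 * 0 * cos w + 0 ^ 2)))
      with (1 / (1 + Pi0 / sigma2)) by (field; lra).
    reflexivity. }
  unfold K_exp. set (D := KL_gauss 1 (1 + Pi0 / sigma2)).
  rewrite (RInt_ext _ (fun _ => D)) by (intros w _; apply Hpt).
  rewrite RInt_const. pose proof PI_RGT_0.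
  change (/ (2 * PI) * ((2 * PI - 0) * D) = D). field. lra.
Qed.

Lemma K_exp_eq a : 0 <= a <= 1 ->
  K_exp Pi0 sigma2 a = exponent_of_gain (Pi0 / sigma2) (sf_gain (Pi0 / sigma2) a).
Proof.
  intros Ha. destruct (Req_dec a 1) as [-> | Ha1].
  { rewrite K_exp_1, sf_gain_1. unfold exponent_of_gain. rewrite ln_1. field. lra. }
  assert (Ha' : 0 <= a < 1) by lra.
  rewrite K_exp_gain_form by exact Ha'. cbv zeta.
  pose proof (sf_gain_gt1 _ Gamma_gt1 a Ha').
  rewrite (sf_root_ratio (Pi0 / sigma2)); [| apply sf_gain_root; lra | nra | nra].
  unfold exponent_of_gain, Rdiv. ring.
Qed.

Lemma K_exp_decreasing a b : 0 <= a -> a < b -> b <= 1 -> K_exp Pi0 sigma2 b < K_exp Pi0 sigma2 a.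
Proof.
  intros Ha Hab Hb. rewrite !K_exp_eq by lra.
  apply exponent_of_gain_increasing.
  - exact Gamma_gt1.
  - apply sf_gain_ge1; lra.
  - apply sf_gain_decreasing; assumption.
  - apply sf_gain_le; lra.
Qed.

End ErrorExponent.

Theorem theorem3 (Pi0 sigma2 : R) (hPi0 : 0 < Pi0) (hsigma2 : 0 < sigma2)
  (hGamma : Pi0 / sigma2 > 1) :
  (forall a b : R, 0 <= a -> a < b -> b <= 1 ->
     K_exp Pi0 sigma2 b < K_exp Pi0 sigma2 a) /\
  (forall a : R, 0 <= a <= 1 -> K_exp Pi0 sigma2 a <= K_exp Pi0 sigma2 0) /\
  K_exp Pi0 sigma2 0 = KL_gauss 1 (1 + Pi0 / sigma2).
Proof.
  pose proof (K_exp_decreasing Pi0 sigma2 hsigma2 hGamma) as Hdecr.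
  split; [exact Hdecr | split].
  - intros a Ha. destruct (Req_dec a 0) as [-> | Ha0]; [lra|].
    apply Rlt_le, Hdecr; lra.
  - exact (K_exp_0 Pi0 sigma2 hsigma2 hGamma).
Qed.
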